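(* Let $N\ge1$ and let $T_N$ be the $N\times N$ Pascal matrix $(T_N)_{jk}=\binom{j+k}{j}$, $0\le j,k<N$. Let $J_N$ be the $N\times N$ symmetric tridiagonal matrix with $$(J_N)_{kk}=k\,(2k^2+3k+2-N^2),\qquad (J_N)_{k,k+1}=(J_N)_{k+1,k}=(k+1)\big(N^2-(k+1)^2\big),$$ and all other entries zero; equivalently $(J_N)_{jk}=(N^2J-\widetilde J)_{jk}$ for $0\le j,k<N$, where $J,\widetilde J$ are the semi-infinite tridiagonal symmetric matrices with diagonals $-n$, resp. $-2n^3-3n^2-2n$, and off-diagonal entries $J_{n-1,n}=n$, resp. $\widetilde J_{n-1,n}=n^3$. Then $J_NT_N=T_NJ_N$.
   Context: Matrix indices start at $0$. *)

From mathcomp Require Import all_boot all_order all_algebra.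
Set Implicit Arguments. Unset Strict Implicit. Unset Printing Implicit Defensive.
Import GRing.Theory Num.Theory.
Local Open Scope ring_scope.

Definition pascal_mx (N : nat) : 'M[int]_N :=
  \matrix_(j < N, k < N) ('C(j + k, j))%:Z.

Definition JN_entry (N j k : nat) : int :=
  if j == k then (k%:Z) * (2 * k%:Z ^+ 2 + 3 * k%:Z + 2 - N%:Z ^+ 2)
  else if j.+1 == k then (k%:Z) * (N%:Z ^+ 2 - k%:Z ^+ 2)
  else if k.+1 == j then (j%:Z) * (N%:Z ^+ 2 - j%:Z ^+ 2)
  else 0.

Definition J_mx (N : nat) : 'M[int]_N :=
  \matrix_(j < N, k < N) JN_entry N j k.

From mathcomp Require Import all_boot all_order all_algebra.
From mathcomp Require Import ring zify.
Import GRing.Theory Num.Theory.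
Local Open Scope ring_scope.

(* Both sides of the identity are entries of J applied to a column of the
   Pascal matrix, so the theorem says that the three-term combination
   (J T)_{jk} = J_off j T_{j-1,k} + J_diag j T_{jk} + J_off (j+1) T_{j+1,k}
   is symmetric in j and k.  The Pascal recurrences
   j (j+k) T_{j-1,k} = j^2 T_{jk} and (j+1) T_{j+1,k} = (j+k+1) T_{jk}
   give (j+k) (J T)_{jk} = T_{jk} q(j,k) for an explicitly symmetric
   polynomial q, and T is symmetric. *)

Definition pascal (j k : nat) : int := ('C(j + k, j))%:Z.

Definition J_diag (N k : nat) : int :=
  k%:Z * (2 * k%:Z ^+ 2 + 3 * k%:Z + 2 - N%:Z ^+ 2).

(* The entry J_{k-1,k}; it vanishes at k = 0 and k = N, which absorbs the
   boundary rows of the truncation. *)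
Definition J_off (N k : nat) : int := k%:Z * (N%:Z ^+ 2 - k%:Z ^+ 2).

Definition J_apply (N j : nat) (F : nat -> int) : int :=
  J_off N j * F j.-1 + J_diag N j * F j + J_off N j.+1 * F j.+1.

Definition J_pascal_coef (N j k : nat) : int :=
  N%:Z ^+ 2 * (j%:Z ^+ 2 + j%:Z * k%:Z + k%:Z ^+ 2 + j%:Z + k%:Z)
  - (j%:Z * k%:Z + j%:Z + k%:Z) ^+ 2 - (j%:Z + k%:Z).

Lemma pascal_sym j k : pascal j k = pascal k j.
Proof. by rewrite /pascal addnC -bin_sub ?leq_addl // addnK. Qed.

Lemma mul_pascal_pred j k :
  j%:Z * (j%:Z + k%:Z) * pascal j.-1 k = j%:Z ^+ 2 * pascal j k.
Proof.
case: j => [|j]; first by rewrite !mul0r.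
by rewrite /pascal -PoszD -!PoszM -!mulnA -mul_bin_diag addSn.
Qed.

Lemma mul_pascal_succ j k :
  (j%:Z + 1) * pascal j.+1 k = (j%:Z + k%:Z + 1) * pascal j k.
Proof.
by rewrite /pascal -[1]/(1%N%:Z) -!PoszD -!PoszM !addn1 -mul_bin_diag addSn.
Qed.

Lemma J_apply_pascal N j k :
  (j%:Z + k%:Z) * J_apply N j (pascal^~ k) = pascal j k * J_pascal_coef N j k.
Proof.
have pred := mul_pascal_pred j k; have succ := mul_pascal_succ j k.
rewrite /J_apply /J_off [(j.+1)%:Z]intS.
transitivity ((N%:Z ^+ 2 - j%:Z ^+ 2) * (j%:Z * (j%:Z + k%:Z) * pascal j.-1 k)
  + (j%:Z + k%:Z) * J_diag N j * pascal j k
  + (N%:Z ^+ 2 - (j%:Z + 1) ^+ 2) * (j%:Z + k%:Z)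
    * ((j%:Z + 1) * pascal j.+1 k)); first by ring.
by rewrite pred succ /J_diag /J_pascal_coef; ring.
Qed.

Lemma J_apply_pascal_sym N j k :
  J_apply N j (pascal^~ k) = J_apply N k (pascal^~ j).
Proof.
have [jk0|jk_neq0] := eqVneq (j + k)%N 0%N.
  by move: jk0 => /eqP; rewrite addn_eq0 => /andP[/eqP-> /eqP->].
apply: (@mulfI _ (j%:Z + k%:Z)); first by rewrite -PoszD.
rewrite J_apply_pascal addrC J_apply_pascal pascal_sym /J_pascal_coef; ring.
Qed.

Lemma sum_ord_eq (R : nmodType) n m (x : R) :
  \sum_(l < n) (if l == m :> nat then x else 0) = if (m < n)%N then x else 0.
Proof. by rewrite -big_mkcond big_ord1_eq. Qed.

Lemma JN_entry_mulE N j l (F : nat -> int) :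
  JN_entry N j l * F l =
    (if l == j then J_diag N j * F j else 0)
  + (if l == j.+1 then J_off N j.+1 * F j.+1 else 0)
  + (if l == j.-1 then J_off N j * F j.-1 else 0).
Proof.
rewrite /JN_entry -/(J_diag N l) -/(J_off N l) -/(J_off N j) (eq_sym j.+1).
have [->|ne_lj] := eqVneq l j.
  rewrite ifN; last by lia.
  case: j => [|j]; first by rewrite /= /J_off !mul0r !addr0.
  by rewrite ifN ?addr0 //; lia.
rewrite add0r; have [->|ne_lSj] := eqVneq l j.+1.
  by rewrite ifN ?addr0 //; lia.
rewrite add0r; have [->|ne_lPj] := eqVneq l j.-1.
  by case: j ne_lj {ne_lSj} => [|j] //; rewrite eqxx.
by rewrite ifN ?mul0r //; lia.
Qed.

Lemma sum_JN_entry N j (F : nat -> int) : (j < N)%N ->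
  \sum_(l < N) JN_entry N j l * F l = J_apply N j F.
Proof.
move=> lt_jN; under eq_bigr => l _ do rewrite JN_entry_mulE.
rewrite !big_split /= !sum_ord_eq lt_jN (leq_ltn_trans (leq_pred j) lt_jN).
rewrite /J_apply addrC addrA; case: ltnP => // ge_SjN.
have -> : N = j.+1 by lia.
by rewrite /J_off subrr !mulr0 mul0r addr0.
Qed.

Lemma JN_entry_sym N j k : JN_entry N j k = JN_entry N k j.
Proof.
rewrite /JN_entry eq_sym.
have [->//|_] := eqVneq k j.
by case: (eqVneq j.+1 k) => [<-|//]; rewrite ifN //; lia.
Qed.

Theorem theorem3p2 (N : nat) (hN : (1 <= N)%N) :
  J_mx N *m pascal_mx N = pascal_mx N *m J_mx N.
Proof.
apply/matrixP => j k; rewrite !mxE.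
under eq_bigr => l _ do rewrite !mxE -/(pascal l k).
under [RHS]eq_bigr => l _ do
  rewrite !mxE -/(pascal j l) pascal_sym JN_entry_sym mulrC.
by rewrite !(sum_JN_entry _ _ (pascal^~ _)) // J_apply_pascal_sym.
Qed.
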